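(* Let $(\mathcal{C},\Delta,\varepsilon)$ be a cocommutative coassociative counital coalgebra over a field $\mathbb{K}$ and let $(\mathcal{C},T)$ be a trilinear shelf. Equip $\mathcal{C}\otimes\mathcal{C}$ with the tensor product coalgebra structure $\Delta(u\otimes v)=(u_{(1)}\otimes v_{(1)})\otimes(u_{(2)}\otimes v_{(2)})$, $\varepsilon(u\otimes v)=\varepsilon(u)\varepsilon(v)$, and define $\lhd_T:(\mathcal{C}\otimes\mathcal{C})\otimes(\mathcal{C}\otimes\mathcal{C})\to\mathcal{C}\otimes\mathcal{C}$ by $(u\otimes v)\lhd_T(m\otimes n)=T(u,m_{(1)},n_{(1)})\otimes T(v,m_{(2)},n_{(2)})$. Then $(\mathcal{C}\otimes\mathcal{C},\lhd_T)$ is a linear shelf. If moreover $(\mathcal{C},T)$ is a trilinear rack, then $(\mathcal{C}\otimes\mathcal{C},\lhd_T)$ is a linear rack, and the map $R^{\lhd_T}:(\mathcal{C}\otimes\mathcal{C})^{\otimes2}\to(\mathcal{C}\otimes\mathcal{C})^{\otimes 2}$, $R^{\lhd_T}(U\otimes V)=V_{(1)}\otimes(U\lhd_T V_{(2)})$, coincides with the map $R^T$ given by $R^T((u\otimes v)\otimes(m\otimes n))=(m_{(1)}\otimes n_{(1)})\otimes\big(T(u,m_{(2)},n_{(2)})\otimes T(v,m_{(3)},n_{(3)})\big)$.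
   Context: Sweedler notation: $\Delta(x)=x_{(1)}\otimes x_{(2)}$, $(\Delta\otimes\mathrm{Id})\Delta(x)=x_{(1)}\otimes x_{(2)}\otimes x_{(3)}$, etc. Cocommutative means $\tau\circ\Delta=\Delta$ with $\tau$ the flip. A coalgebra morphism $f$ satisfies $\Delta'\circ f=(f\otimes f)\circ\Delta$, $\varepsilon'\circ f=\varepsilon$; tensor powers carry the tensor product coalgebra structure. A linear shelf is a coalgebra $\mathcal{C}$ with a coalgebra morphism $\lhd:\mathcal{C}\otimes\mathcal{C}\to\mathcal{C}$ with $(u\lhd v)\lhd w=(u\lhd w_{(1)})\lhd(v\lhd w_{(2)})$; it is a linear rack if there is a linear shelf structure $\widetilde{\lhd}$ on $\mathcal{C}$ with $(u\lhd v_{(2)})\widetilde{\lhd}v_{(1)}=\varepsilon(v)u=(u\widetilde{\lhd}v_{(2)})\lhd v_{(1)}$ for all $u,v$. A trilinear shelf is a coalgebra $\mathcal{C}$ with a coalgebra morphism $T:\mathcal{C}^{\otimes3}\to\mathcal{C}$ such that $T(T(x,y,z),u,v)=T(T(x,u_{(1)},v_{(1)}),T(y,u_{(2)},v_{(2)}),T(z,u_{(3)},v_{(3)}))$ for all $x,y,z,u,v$; it is a trilinear rack if there is a trilinear shelf structure $\widetilde{T}$ on $\mathcal{C}$ with $\widetilde{T}(T(x,y_{(2)},z_{(2)}),z_{(1)},y_{(1)})=\varepsilon(y)\varepsilon(z)x=T(\widetilde{T}(x,y_{(2)},z_{(2)}),z_{(1)},y_{(1)})$ for all $x,y,z$. 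*)

From HB Require Import structures.
From mathcomp Require Import all_boot all_algebra generic_quotient.
From mathcomp Require Import boolp.
Import GRing.Theory.
Set Implicit Arguments.
Unset Strict Implicit.
Unset Printing Implicit Defensive.
Local Open Scope ring_scope.
Local Open Scope quotient_scope.

(* Tensor products of K-vector spaces, built from their universal      *)
(* property: V (x) W is the type of finite formal sums of pairs (v,w)  *)
(* modulo the relation identifying two sums that have the same image   *)
(* under every bilinear map into every K-vector space.                 *)

Section Tensor.
Variables (K : fieldType) (V W : lmodType K).

Definition bilinear_map (U : lmodType K) (b : V -> W -> U) : Prop :=
  (forall (a : K) (v v' : V) (w : W), b (a *: v + v') w = a *: b v w + b v' w) /\
  (forall (a : K) (v : V) (w w' : W), b v (a *: w + w') = a *: b v w + b v w').

Definition sumb (U : lmodType K) (b : V -> W -> U) (s : seq (V * W)) : U :=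
  \sum_(p <- s) b p.1 p.2.

Definition tensrel (s t : seq (V * W)) : bool :=
  `[< forall (U : lmodType K) (b : V -> W -> U),
        bilinear_map b -> sumb b s = sumb b t >].

Lemma tensrel_refl : reflexive tensrel.
Proof. by move=> s; apply/asboolP. Qed.
Lemma tensrel_sym : symmetric tensrel.
Proof.
by move=> s t; apply/asboolP/asboolP => H U b hb; rewrite H.
Qed.
Lemma tensrel_trans : transitive tensrel.
Proof.
by move=> t s u /asboolP H1 /asboolP H2; apply/asboolP => U b hb; rewrite H1 // H2.
Qed.

Canonical tensrel_equiv := EquivRel tensrel tensrel_refl tensrel_sym tensrel_trans.

Definition tens := {eq_quot tensrel}.
HB.instance Definition _ := Choice.on tens.

Lemma sumb_cat (U : lmodType K) (b : V -> W -> U) s t :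
  sumb b (s ++ t) = sumb b s + sumb b t.
Proof. by rewrite /sumb big_cat. Qed.

Definition sscale (a : K) (s : seq (V * W)) := [seq (a *: p.1, p.2) | p <- s].

Lemma bil0l (U : lmodType K) (b : V -> W -> U) w :
  bilinear_map b -> b 0 w = 0.
Proof.
move=> [hl _]; have := hl (-1) 0 0 w.
by rewrite scaleN1r oppr0 addr0 scaleN1r addNr.
Qed.

Lemma sumb_scale (U : lmodType K) (b : V -> W -> U) a s :
  bilinear_map b -> sumb b (sscale a s) = a *: sumb b s.
Proof.
move=> hb; rewrite /sumb big_map scaler_sumr; apply: eq_bigr => p _ /=.
by have := hb.1 a p.1 0 p.2; rewrite addr0 bil0l // addr0.
Qed.

Lemma sumb_repr (U : lmodType K) (b : V -> W -> U) s :
  bilinear_map b -> sumb b (repr (\pi_tens s)) = sumb b s.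
Proof.
move=> hb; have /asboolP H : tensrel (repr (\pi_tens s)) s.
  by apply/eqmodP; rewrite reprK.
exact: H.
Qed.

Lemma tens_eqP s t :
  (forall (U : lmodType K) (b : V -> W -> U), bilinear_map b -> sumb b s = sumb b t) ->
  \pi_tens s = \pi_tens t.
Proof. by move=> H; apply/eqmodP/asboolP. Qed.

Definition tzero : tens := \pi_tens [::].
Definition tadd (x y : tens) : tens := \pi_tens (repr x ++ repr y).
Definition topp (x : tens) : tens := \pi_tens (sscale (-1) (repr x)).
Definition tscale (a : K) (x : tens) : tens := \pi_tens (sscale a (repr x)).

Ltac tsolve := move=> *; rewrite /tzero /tadd /topp /tscale;
  apply: tens_eqP => U b hb;
  rewrite ?(sumb_cat, sumb_repr, sumb_scale, sumb_cat) //.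

Lemma taddA : associative tadd.
Proof. by tsolve; rewrite addrA. Qed.
Lemma taddC : commutative tadd.
Proof. by tsolve; rewrite addrC. Qed.
Lemma tadd0 : left_id tzero tadd.
Proof.
move=> x; rewrite -[RHS]reprK; tsolve; by rewrite /sumb big_nil add0r.
Qed.
Lemma taddN : left_inverse tzero topp tadd.
Proof. by tsolve; rewrite /sumb big_nil scaleN1r addNr. Qed.

HB.instance Definition _ := GRing.isZmodule.Build tens taddA taddC tadd0 taddN.

Lemma tscaleA a c (x : tens) : tscale a (tscale c x) = tscale (a * c) x.
Proof. by tsolve; rewrite scalerA. Qed.
Lemma tscale1 : left_id 1 tscale.
Proof. move=> x; rewrite -[RHS]reprK; tsolve; by rewrite scale1r. Qed.
Lemma tscaleDr : right_distributive tscale +%R.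
Proof. by move=> a x y; rewrite /GRing.add /=; tsolve; rewrite scalerDr. Qed.
Lemma tscaleDl (x : tens) : {morph tscale^~ x : a c / a + c}.
Proof. by move=> a c; rewrite /GRing.add /=; tsolve; rewrite scalerDl. Qed.

HB.instance Definition _ :=
  GRing.Zmodule_isLmodule.Build K tens tscaleA tscale1 tscaleDr tscaleDl.

Definition tpure (v : V) (w : W) : tens := \pi_tens [:: (v, w)].

(* the linear map V (x) W -> U induced by a bilinear map b : V -> W -> U
   (well defined by construction of the quotient, for b bilinear) *)
Definition tlift (U : lmodType K) (b : V -> W -> U) (x : tens) : U := sumb b (repr x).

End Tensor.

Arguments tens {K} V W.
Arguments tpure {K V W} v w.
Arguments tlift {K V W U} b x.

Notation "v \ot w" := (tpure v w) (at level 40, left associativity).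

Section Coalgebras.
Variable K : fieldType.

Definition linear_map (V U : lmodType K) (f : V -> U) : Prop :=
  forall (a : K) (x y : V), f (a *: x + y) = a *: f x + f y.

Definition tmap (V W V' W' : lmodType K) (f : V -> V') (g : W -> W')
  : tens V W -> tens V' W' := tlift (fun v w => f v \ot g w).

Definition tassoc (A B C : lmodType K) : tens (tens A B) C -> tens A (tens B C) :=
  tlift (fun p c => tlift (fun a b => a \ot (b \ot c)) p).

Definition tflip (A B : lmodType K) : tens A B -> tens B A :=
  tlift (fun a b => b \ot a).

Section Coalg.
Variables (D : lmodType K) (delta : D -> tens D D) (eps : D -> K).

Definition coassociative : Prop :=
  forall x, tassoc (tmap delta id (delta x)) = tmap id delta (delta x).

Definition counital : Prop :=
  forall x, tlift (fun a b => eps a *: b) (delta x) = x /\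
            tlift (fun a b => eps b *: a) (delta x) = x.

Definition is_coalgebra : Prop :=
  linear_map delta /\ linear_map (eps : D -> K^o) /\ coassociative /\ counital.

Definition cocommutative : Prop := forall x, tflip (delta x) = delta x.

End Coalg.

Definition tdelta (A B : lmodType K) (dA : A -> tens A A) (dB : B -> tens B B)
  : tens A B -> tens (tens A B) (tens A B) :=
  tlift (fun a b => tlift (fun a1 a2 => tlift (fun b1 b2 =>
     (a1 \ot b1) \ot (a2 \ot b2)) (dB b)) (dA a)).

Definition teps (A B : lmodType K) (eA : A -> K) (eB : B -> K) : tens A B -> K :=
  @tlift K A B K^o (fun a b => (eA a * eB b : K^o)).

Definition coalg_morphism (A B : lmodType K)
  (dA : A -> tens A A) (eA : A -> K) (dB : B -> tens B B) (eB : B -> K)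
  (f : A -> B) : Prop :=
  linear_map f /\ (forall x, dB (f x) = tmap f f (dA x)) /\ (forall x, eB (f x) = eA x).

(* Sweedler helpers: x_(1) (x) x_(2) (x) x_(3) := (delta (x) id) delta x *)
Definition delta3 (C : lmodType K) (delta : C -> tens C C) (x : C) : tens (tens C C) C :=
  tmap delta id (delta x).

Definition sw3 (A B C U : lmodType K) (f : A -> B -> C -> U) (x : tens (tens A B) C) : U :=
  tlift (fun p c => tlift (fun a b => f a b c) p) x.

Section Shelves.
Variables (D : lmodType K) (delta : D -> tens D D) (eps : D -> K).

(* linear shelf: lhd : D (x) D -> D, u <| v := lhd (u (x) v) *)
Definition linear_shelf (lhd : tens D D -> D) : Prop :=
  is_coalgebra delta eps /\
    coalg_morphism (tdelta delta delta) (teps eps eps) delta eps lhd /\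
    forall u v w : D,
    lhd (lhd (u \ot v) \ot w) =
    tlift (fun w1 w2 => lhd (lhd (u \ot w1) \ot lhd (v \ot w2))) (delta w).

Definition linear_rack (lhd : tens D D -> D) : Prop :=
  linear_shelf lhd /\
    exists lhd' : tens D D -> D, linear_shelf lhd' /\
      forall u v : D,
      tlift (fun v1 v2 => lhd' (lhd (u \ot v2) \ot v1)) (delta v) = eps v *: u /\
        tlift (fun v1 v2 => lhd (lhd' (u \ot v2) \ot v1)) (delta v) = eps v *: u.

(* trilinear shelf: T : (D (x) D) (x) D -> D, T(x,y,z) := T ((x (x) y) (x) z) *)
Definition trilinear_shelf (T : tens (tens D D) D -> D) : Prop :=
  is_coalgebra delta eps /\
    coalg_morphism (tdelta (tdelta delta delta) delta)
                 (teps (teps eps eps) eps) delta eps T /\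
    forall x y z u v : D,
    T (T (x \ot y \ot z) \ot u \ot v) =
    sw3 (fun u1 u2 u3 => sw3 (fun v1 v2 v3 =>
        T (T (x \ot u1 \ot v1) \ot T (y \ot u2 \ot v2) \ot T (z \ot u3 \ot v3)))
      (delta3 delta v)) (delta3 delta u).

Definition trilinear_rack (T : tens (tens D D) D -> D) : Prop :=
  trilinear_shelf T /\
    exists T' : tens (tens D D) D -> D, trilinear_shelf T' /\
      forall x y z : D,
      tlift (fun y1 y2 => tlift (fun z1 z2 =>
         T' (T (x \ot y2 \ot z2) \ot z1 \ot y1)) (delta z)) (delta y)
        = (eps y * eps z) *: x /\
        tlift (fun y1 y2 => tlift (fun z1 z2 =>
         T (T' (x \ot y2 \ot z2) \ot z1 \ot y1)) (delta z)) (delta y)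
        = (eps y * eps z) *: x.

End Shelves.

Section TensorShelf.
Variables (C : lmodType K) (delta : C -> tens C C) (eps : C -> K)
          (T : tens (tens C C) C -> C).


Definition lhdT : tens (tens C C) (tens C C) -> tens C C :=
  tlift (fun U V => tlift (fun u v => tlift (fun m n =>
    tlift (fun m1 m2 => tlift (fun n1 n2 =>
       T (u \ot m1 \ot n1) \ot T (v \ot m2 \ot n2)) (delta n)) (delta m)) V) U).

Definition R_lhdT : tens (tens C C) (tens C C) -> tens (tens C C) (tens C C) :=
  tlift (fun U V => tlift (fun V1 V2 => V1 \ot lhdT (U \ot V2))
                          (tdelta delta delta V)).

Definition R_T : tens (tens C C) (tens C C) -> tens (tens C C) (tens C C) :=
  tlift (fun U V => tlift (fun u v => tlift (fun m n =>
    sw3 (fun m1 m2 m3 => sw3 (fun n1 n2 n3 =>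
       (m1 \ot n1) \ot (T (u \ot m2 \ot n2) \ot T (v \ot m3 \ot n3))) (delta3 delta n))
      (delta3 delta m)) V) U).

End TensorShelf.
End Coalgebras.

(* Every identity is reduced by linearity to pure tensors, where both sides
   become iterated Sweedler sums over the coproducts of the tensor factors.
   The tensor coalgebra axioms only use coassociativity and counitality of each
   factor.  Since T is a coalgebra morphism, so is <|_T once cocommutativity
   exchanges the middle Sweedler factors of m and n; likewise the shelf identity
   for <|_T is the trilinear shelf identity applied in both tensor factors,
   after coassociativity and cocommutativity bring the Sweedler indices of both
   sides into the same order.  If T' is the inverse of the rack T, the inverse
   of <|_T is <|_T' with the last two arguments of T' exchanged, and
   R^{<|_T} = R^T is coassociativity alone. *)

From HB Require Import structures.
From mathcomp Require Import all_boot all_algebra generic_quotient.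
From mathcomp Require Import boolp.
From Stdlib Require Import Setoid Morphisms.
From mathcomp Require Import ring.
Import GRing.Theory.
Set Implicit Arguments.
Unset Strict Implicit.
Unset Printing Implicit Defensive.
Local Open Scope ring_scope.
Local Open Scope quotient_scope.

Section LinearMaps.
Variable K : fieldType.
Implicit Types V U A B : lmodType K.

Lemma linear_map0 V U (f : V -> U) : linear_map f -> f 0 = 0.
Proof.
move=> hf; have := hf 1 0 0; rewrite scale1r addr0 scale1r => f0.
by apply: (addrI (f 0)); rewrite addr0 -f0.
Qed.

Lemma linear_mapD V U (f : V -> U) : linear_map f -> {morph f : x y / x + y}.
Proof. by move=> hf x y; have := hf 1 x y; rewrite !scale1r. Qed.

Lemma linear_mapZ V U (f : V -> U) a : linear_map f -> {morph f : x / a *: x}.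
Proof. by move=> hf x; rewrite -[a *: x]addr0 hf linear_map0 // addr0. Qed.

Lemma linear_map_id V : linear_map (fun x : V => x).
Proof. by []. Qed.

Lemma linear_map_comp V U (U' : lmodType K) (f : U -> U') (g : V -> U) :
  linear_map f -> linear_map g -> linear_map (fun x => f (g x)).
Proof. by move=> hf hg a x y; rewrite hg hf. Qed.

Lemma linear_map_add V U (g h : V -> U) :
  linear_map g -> linear_map h -> linear_map (fun x => g x + h x).
Proof.
by move=> hg hh a x y; rewrite hg hh scalerDr -!addrA; congr (_ + _); rewrite addrCA.
Qed.

Lemma linear_map_scalel V U (c : K) (g : V -> U) :
  linear_map g -> linear_map (fun x => c *: g x).
Proof. by move=> hg a x y; rewrite hg scalerDr !scalerA mulrC. Qed.

Lemma linear_map_scaler V U (e : V -> K^o) (w : U) :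
  linear_map e -> linear_map (fun x => (e x : K) *: w).
Proof. by move=> he a x y; rewrite he scalerDl -scalerA. Qed.

Lemma linear_map_mulr V (e : V -> K^o) (c : K) :
  linear_map e -> linear_map (fun x => (e x * c : K^o)).
Proof. by move=> he a x y; rewrite he /= mulrDl -mulrA. Qed.

Lemma linear_map_mull V (e : V -> K^o) (c : K) :
  linear_map e -> linear_map (fun x => (c * e x : K^o)).
Proof. by move=> he a x y; rewrite he /= mulrDr mulrCA. Qed.

Lemma bilinear_mapP A B U (b : A -> B -> U) :
  (forall w, linear_map (fun v => b v w)) -> (forall v, linear_map (fun w => b v w)) ->
  bilinear_map b.
Proof. by move=> h1 h2; split=> *; [apply: h1 | apply: h2]. Qed.

End LinearMaps.

Section TensorCalculus.
Variables (K : fieldType) (V W : lmodType K).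

Lemma tens_addE (x y : tens V W) : x + y = tadd x y. Proof. by []. Qed.
Lemma tens_scaleE a (x : tens V W) : a *: x = tscale a x. Proof. by []. Qed.

Lemma pi_tens_cat (s t : seq (V * W)) :
  \pi_(tens V W) (s ++ t) = (\pi_(tens V W) s : tens V W) + \pi_(tens V W) t.
Proof.
rewrite tens_addE /tadd; apply: tens_eqP => U b hb.
by rewrite !sumb_cat !sumb_repr.
Qed.

Lemma tpure_bilinear : bilinear_map (@tpure K V W).
Proof.
split=> a v v' w; rewrite /tpure tens_addE tens_scaleE /tadd /tscale;
apply: tens_eqP => U b hb; rewrite sumb_cat sumb_repr // sumb_scale // sumb_repr //
  sumb_repr // /sumb !big_seq1 /=.
- by rewrite hb.1.
- by rewrite hb.2.
Qed.

Lemma tlift_pure (U : lmodType K) (b : V -> W -> U) v w :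
  bilinear_map b -> tlift b (v \ot w) = b v w.
Proof. by move=> hb; rewrite /tlift /tpure sumb_repr // /sumb big_seq1. Qed.

Lemma tlift_linear (U : lmodType K) (b : V -> W -> U) :
  bilinear_map b -> linear_map (tlift b).
Proof.
move=> hb a x y; rewrite tens_addE tens_scaleE /tadd /tscale /tlift.
by rewrite sumb_repr // sumb_cat sumb_repr // sumb_scale.
Qed.

Lemma pi_tensE (s : seq (V * W)) : \pi_(tens V W) s = sumb (@tpure K V W) s.
Proof.
elim: s => [|[v w] s IH]; first by rewrite /sumb big_nil.
by rewrite -cat1s pi_tens_cat IH /sumb big_cons.
Qed.

Lemma tlift_tpure (x : tens V W) : tlift (@tpure K V W) x = x.
Proof. by rewrite /tlift -pi_tensE reprK. Qed.

Lemma tlift_morph (U U' : lmodType K) (f : U -> U') (G : V -> W -> U) x :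
  linear_map f -> f (tlift G x) = tlift (fun a b => f (G a b)) x.
Proof.
move=> hf; rewrite /tlift /sumb.
exact: (big_morph f (linear_mapD hf) (linear_map0 hf)).
Qed.

Lemma eq_tlift (U : lmodType K) (F G : V -> W -> U) x :
  (forall a b, F a b = G a b) -> tlift F x = tlift G x.
Proof. by move=> FG; rewrite /tlift /sumb; apply: eq_bigr => p _; rewrite FG. Qed.

Lemma tens_ext (U : lmodType K) (f g : tens V W -> U) :
  linear_map f -> linear_map g -> (forall v w, f (v \ot w) = g (v \ot w)) ->
  forall x, f x = g x.
Proof.
by move=> hf hg fg x; rewrite -(tlift_tpure x) !tlift_morph //; apply: eq_tlift.
Qed.

Lemma tlift_scale (U : lmodType K) (G : V -> W -> U) c x :
  tlift (fun a b => c *: G a b) x = c *: tlift G x.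
Proof. by rewrite /tlift /sumb scaler_sumr. Qed.

Lemma tlift_scaleD (U : lmodType K) (F G : V -> W -> U) c x :
  tlift (fun a b => c *: F a b + G a b) x = c *: tlift F x + tlift G x.
Proof. by rewrite /tlift /sumb big_split /= scaler_sumr. Qed.

End TensorCalculus.

Lemma tlift_exchange (K : fieldType) (A B C D U : lmodType K)
  (H : A -> B -> C -> D -> U) x y :
  tlift (fun a b => tlift (fun c d => H a b c d) y) x =
  tlift (fun c d => tlift (fun a b => H a b c d) x) y.
Proof. by rewrite /tlift /sumb exchange_big. Qed.

#[export] Instance tlift_proper (K : fieldType) (V W U : lmodType K) :
  Proper (pointwise_relation V (pointwise_relation W eq) ==> eq ==> eq) (@tlift K V W U).
Proof. by move=> F G FG x _ <-; apply: eq_tlift. Qed.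

Section LinearityLemmas.
Variable K : fieldType.
Implicit Types V A B U : lmodType K.

Lemma linear_map_tpurel V A B (g : V -> A) (w : B) :
  linear_map g -> linear_map (fun x => g x \ot w).
Proof. by move=> hg a x y; rewrite hg (tpure_bilinear A B).1. Qed.

Lemma linear_map_tpurer V A B (g : V -> B) (v : A) :
  linear_map g -> linear_map (fun x => v \ot g x).
Proof. by move=> hg a x y; rewrite hg (tpure_bilinear A B).2. Qed.

Lemma linear_map_tlift_fun V A B U (F : V -> A -> B -> U) y :
  (forall a b, linear_map (fun x => F x a b)) -> linear_map (fun x => tlift (F x) y).
Proof.
by move=> hF c x x'; rewrite -tlift_scaleD; apply: eq_tlift => a b; apply: hF.
Qed.

Lemma linear_map_tlift_comp V A B U (b : A -> B -> U) (g : V -> tens A B) :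
  bilinear_map b -> linear_map g -> linear_map (fun x => tlift b (g x)).
Proof. by move=> hb; apply: linear_map_comp; apply: tlift_linear. Qed.

End LinearityLemmas.

Ltac linearity_step :=
  lazymatch goal with
  | |- bilinear_map _ => first [assumption | apply: bilinear_mapP]
  | |- forall _, _ => intro; cbv beta
  | |- linear_map (fun x => tlift _ _) =>
      first [apply: linear_map_tlift_fun | apply: linear_map_tlift_comp]
  | |- linear_map (fun x => tpure _ _) =>
      first [apply: linear_map_tpurel | apply: linear_map_tpurer]
  | |- linear_map (fun x => GRing.scale _ _) =>
      first [apply: linear_map_scalel | apply: linear_map_scaler]
  | |- linear_map (fun x => GRing.add _ _) => apply: linear_map_add
  | |- linear_map (fun x => GRing.mul _ _) =>
      first [apply: linear_map_mulr | apply: linear_map_mull]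
  | |- linear_map (tpure _) => exact: (linear_map_tpurer _ (@linear_map_id _ _))
  | |- linear_map (tlift _) => apply: tlift_linear
  | |- linear_map _ =>
      first [ exact: linear_map_id | assumption
            | match goal with
              | H : linear_map ?f |- _ => apply: (linear_map_comp H)
              | H : forall _ _ _, linear_map _ |- _ => exact: H
              | H : forall _ _, linear_map _ |- _ => exact: H
              end ]
  end.

Ltac linearity := repeat linearity_step.

Section TensorOperations.
Variable K : fieldType.
Implicit Types A B : lmodType K.

Lemma tpure_tliftl (V W A B : lmodType K) (G : V -> W -> A) x (w : B) :
  tlift G x \ot w = tlift (fun a b => G a b \ot w) x.
Proof. by rewrite (tlift_morph (f := fun p => p \ot w)) //; linearity. Qed.

Lemma tpure_tliftr (V W A B : lmodType K) (G : V -> W -> B) x (v : A) :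
  v \ot tlift G x = tlift (fun a b => v \ot G a b) x.
Proof. by rewrite (tlift_morph (f := fun p => v \ot p)) //; linearity. Qed.

Lemma tpureZl A B c (a : A) (b : B) : (c *: a) \ot b = c *: (a \ot b).
Proof. by rewrite (linear_mapZ (f := fun x => x \ot b)) //; linearity. Qed.

Lemma tpureZr A B c (a : A) (b : B) : a \ot (c *: b) = c *: (a \ot b).
Proof. by rewrite (linear_mapZ (f := fun x => a \ot x)) //; linearity. Qed.

Lemma tlift_tlift (V W A B U : lmodType K) (F : A -> B -> U) (G : V -> W -> tens A B) x :
  bilinear_map F -> tlift F (tlift G x) = tlift (fun a b => tlift F (G a b)) x.
Proof. by move=> hF; rewrite tlift_morph //; apply: tlift_linear. Qed.

Lemma tens3_ext A B (C U : lmodType K) (f g : tens (tens A B) C -> U) :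
  linear_map f -> linear_map g ->
  (forall a b c, f (a \ot b \ot c) = g (a \ot b \ot c)) -> forall y, f y = g y.
Proof.
move=> hf hg fg; apply: tens_ext => // p c.
by apply: (tens_ext (f := fun p => f (p \ot c)) (g := fun p => g (p \ot c))); linearity.
Qed.

Lemma tens22_ext A B (C D U : lmodType K) (f g : tens (tens A B) (tens C D) -> U) :
  linear_map f -> linear_map g ->
  (forall a b c d, f (a \ot b \ot (c \ot d)) = g (a \ot b \ot (c \ot d))) ->
  forall y, f y = g y.
Proof.
move=> hf hg fg; apply: tens_ext => // p q.
apply: (tens_ext (f := fun p => f (p \ot q)) (g := fun p => g (p \ot q))); try by linearity.
move=> a b.
by apply: (tens_ext (f := fun q => f (a \ot b \ot q)) (g := fun q => g (a \ot b \ot q)));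
  linearity.
Qed.

Lemma tmap_linear (V W V' W' : lmodType K) (f : V -> V') (g : W -> W') :
  linear_map f -> linear_map g -> linear_map (tmap f g).
Proof. by move=> hf hg; apply: tlift_linear; linearity. Qed.

Lemma tmap_pure (V W V' W' : lmodType K) (f : V -> V') (g : W -> W') v w :
  linear_map f -> linear_map g -> tmap f g (v \ot w) = f v \ot g w.
Proof. by move=> hf hg; rewrite /tmap tlift_pure //; linearity. Qed.

Lemma tassoc_linear A B (C : lmodType K) : linear_map (@tassoc K A B C).
Proof. by apply: tlift_linear; linearity. Qed.

Lemma tassoc_pure A B (C : lmodType K) a b c :
  @tassoc K A B C (a \ot b \ot c) = a \ot (b \ot c).
Proof. by rewrite /tassoc !tlift_pure //; linearity. Qed.

Lemma tdelta_linear A B (dA : A -> tens A A) (dB : B -> tens B B) :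
  linear_map dA -> linear_map dB -> linear_map (tdelta dA dB).
Proof. by move=> hA hB; apply: tlift_linear; linearity. Qed.

Lemma tdelta_pure A B (dA : A -> tens A A) (dB : B -> tens B B) a b :
  linear_map dA -> linear_map dB ->
  tdelta dA dB (a \ot b) =
  tlift (fun a1 a2 => tlift (fun b1 b2 => (a1 \ot b1) \ot (a2 \ot b2)) (dB b)) (dA a).
Proof. by move=> hA hB; rewrite /tdelta tlift_pure //; linearity. Qed.

Lemma teps_linear A B (eA : A -> K) (eB : B -> K) :
  linear_map (eA : A -> K^o) -> linear_map (eB : B -> K^o) ->
  linear_map (teps eA eB : _ -> K^o).
Proof. by move=> hA hB; apply: tlift_linear; linearity. Qed.

Lemma teps_pure A B (eA : A -> K) (eB : B -> K) a b :
  linear_map (eA : A -> K^o) -> linear_map (eB : B -> K^o) ->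
  teps eA eB (a \ot b) = eA a * eB b.
Proof. by move=> hA hB; rewrite /teps tlift_pure //; linearity. Qed.

End TensorOperations.

Section Sweedler.
Variables (K : fieldType) (C : lmodType K) (delta : C -> tens C C) (eps : C -> K).
Hypotheses (hd : linear_map delta) (hca : coassociative delta)
  (hcu : counital delta eps) (hcc : cocommutative delta).

Lemma tlift_cocommutative (U : lmodType K) (F : C -> C -> U) x :
  bilinear_map F -> tlift F (delta x) = tlift (fun a b => F b a) (delta x).
Proof.
move=> hF; rewrite -{1}hcc /tflip tlift_morph; last exact: tlift_linear.
by apply: eq_tlift => a b; rewrite tlift_pure.
Qed.

Lemma tlift_coassociative (U : lmodType K) (F : C -> C -> C -> U) x :
  (forall b c, linear_map (fun a => F a b c)) ->
  (forall a c, linear_map (fun b => F a b c)) ->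
  (forall a b, linear_map (fun c => F a b c)) ->
  tlift (fun a b => tlift (fun c d => F c d b) (delta a)) (delta x) =
  tlift (fun a b => tlift (fun c d => F a c d) (delta b)) (delta x).
Proof.
move=> h1 h2 h3.
pose Fl (p : tens C C) (c : C) := tlift (fun a b => F a b c) p.
pose Fr (a : C) (q : tens C C) := tlift (fun b c => F a b c) q.
have bFl : bilinear_map Fl by rewrite /Fl; linearity.
have bFr : bilinear_map Fr by rewrite /Fr; linearity.
have FlFr : forall y, tlift Fl y = tlift Fr (tassoc y).
  apply: tens3_ext; first exact: tlift_linear.
    exact: (linear_map_comp (tlift_linear bFr) (@tassoc_linear _ _ _ _)).
  move=> a b c; rewrite tassoc_pure !tlift_pure // /Fl /Fr !tlift_pure //; linearity.
transitivity (tlift Fl (tmap delta id (delta x))).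
  rewrite /tmap tlift_morph; last exact: tlift_linear.
  by apply: eq_tlift => a b; rewrite tlift_pure.
rewrite FlFr hca /tmap tlift_morph; last exact: tlift_linear.
by apply: eq_tlift => a b; rewrite tlift_pure.
Qed.

Lemma tlift_counitl (U : lmodType K) (G : C -> U) x :
  linear_map G -> tlift (fun a b => eps a *: G b) (delta x) = G x.
Proof.
move=> hG; rewrite -{2}(hcu x).1 tlift_morph //.
by apply: eq_tlift => a b; rewrite linear_mapZ.
Qed.

Lemma tlift_counitr (U : lmodType K) (G : C -> U) x :
  linear_map G -> tlift (fun a b => eps b *: G a) (delta x) = G x.
Proof.
move=> hG; rewrite -{2}(hcu x).2 tlift_morph //.
by apply: eq_tlift => a b; rewrite linear_mapZ.
Qed.

Lemma tlift_cocommutative23 (U : lmodType K) (F : C -> C -> C -> U) x :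
  (forall b c, linear_map (fun a => F a b c)) ->
  (forall a c, linear_map (fun b => F a b c)) ->
  (forall a b, linear_map (fun c => F a b c)) ->
  tlift (fun a c => tlift (fun u1 u2 => F u1 u2 c) (delta a)) (delta x) =
  tlift (fun a c => tlift (fun u1 u2 => F u1 c u2) (delta a)) (delta x).
Proof.
move=> h1 h2 h3.
rewrite (tlift_coassociative (F := fun u1 u2 c => F u1 u2 c)) //.
rewrite (tlift_coassociative (F := fun u1 u2 c => F u1 c u2)) //.
by apply: eq_tlift => a b; rewrite tlift_cocommutative //; linearity.
Qed.

Lemma tlift_cocommutative_mid (U : lmodType K) (G : C -> C -> C -> C -> U) x :
  (forall b c d, linear_map (fun a => G a b c d)) ->
  (forall a c d, linear_map (fun b => G a b c d)) ->
  (forall a b d, linear_map (fun c => G a b c d)) ->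
  (forall a b c, linear_map (fun d => G a b c d)) ->
  tlift (fun p q => tlift (fun p1 p2 => tlift (fun q1 q2 =>
    G p1 p2 q1 q2) (delta q)) (delta p)) (delta x) =
  tlift (fun p q => tlift (fun p1 p2 => tlift (fun q1 q2 =>
    G p1 q1 p2 q2) (delta q)) (delta p)) (delta x).
Proof.
move=> h1 h2 h3 h4.
rewrite (tlift_coassociative
  (F := fun c d b => tlift (fun q1 q2 => G c d q1 q2) (delta b))); try by linearity.
rewrite (tlift_coassociative
  (F := fun c d b => tlift (fun q1 q2 => G c q1 d q2) (delta b))); try by linearity.
apply: eq_tlift => p q.
rewrite -(tlift_coassociative (F := fun c d b => G p c d b)); try by linearity.
rewrite -(tlift_coassociative (F := fun c d b => G p d c b)); try by linearity.
by apply: eq_tlift => a b; rewrite tlift_cocommutative //; linearity.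
Qed.

End Sweedler.

(* [tens_norm] distributes pure tensors and linear maps over sums [tlift];
   [pull_sum y], used under a binder, exchanges sums until the sum over [y] is
   the outermost one. *)
Ltac tens_norm_with extra := repeat first
  [ setoid_rewrite tpure_tliftl
  | setoid_rewrite tpure_tliftr
  | setoid_rewrite tlift_tlift; [| by linearity ..]
  | setoid_rewrite tlift_pure; [| by linearity ..]
  | extra ].
Ltac tens_norm := tens_norm_with fail.

Ltac on_lhs tac := match goal with |- _ = ?R =>
  let e := fresh "e" in set e := R; tac; rewrite /e; clear e end.
Ltac on_rhs tac := symmetry; on_lhs tac; symmetry.

Ltac pull_sum y := lazymatch goal with
  | |- Under_rel.Under_rel _ _ (tlift _ y) _ => idtac
  | |- Under_rel.Under_rel _ _ (tlift _ _) _ =>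
      under eq_tlift => ? ? do pull_sum y; rewrite tlift_exchange
  end.
Ltac pull_sum_lhs y := lazymatch goal with
  | |- tlift _ y = _ => idtac
  | |- tlift _ _ = _ => on_lhs ltac:(under eq_tlift => ? ? do pull_sum y;
                                     rewrite tlift_exchange)
  end.
Ltac pull_sum_rhs y := symmetry; pull_sum_lhs y; symmetry.

Ltac coassoc := rewrite tlift_coassociative; [| by linearity ..].
Ltac cocomm_mid := rewrite tlift_cocommutative_mid; [| by linearity ..].

Section TensorCoalgebra.
Variables (K : fieldType) (A B : lmodType K).
Variables (dA : A -> tens A A) (eA : A -> K) (dB : B -> tens B B) (eB : B -> K).
Hypotheses (hA : is_coalgebra dA eA) (hB : is_coalgebra dB eB).

Lemma tensor_coassociative : coassociative (tdelta dA dB).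
Proof.
have [hdA [_ [hcA _]]] := hA; have [hdB [_ [hcB _]]] := hB.
have hD := tdelta_linear hdA hdB.
have hmD := tmap_linear hD (@linear_map_id _ (tens A B)).
have hDm := tmap_linear (@linear_map_id _ (tens A B)) hD.
have hassoc := @tassoc_linear K (tens A B) (tens A B) (tens A B).
move=> X; apply: (tens_ext
  (f := fun X => tassoc (tmap (tdelta dA dB) id (tdelta dA dB X)))
  (g := fun X => tmap id (tdelta dA dB) (tdelta dA dB X))); try by linearity.
move=> u v /=; rewrite (tdelta_pure _ _ hdA hdB); tens_norm.
on_lhs ltac:((under eq_tlift => a b do rewrite tlift_exchange); coassoc).
on_rhs ltac:(under eq_tlift => a b do rewrite tlift_exchange).
by apply: eq_tlift => a b; apply: eq_tlift => a1 b1; coassoc.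
Qed.

Lemma tensor_counital : counital (tdelta dA dB) (teps eA eB).
Proof.
have [hdA [heA [_ hcuA]]] := hA; have [hdB [heB [_ hcuB]]] := hB.
have hD := tdelta_linear hdA hdB; have hE := teps_linear heA heB.
move=> X; split.
  apply: (tens_ext (f := fun X => tlift (fun a b => teps eA eB a *: b) (tdelta dA dB X))
     (g := fun X => X)); try by linearity.
  move=> u v /=; rewrite (tdelta_pure _ _ hdA hdB); tens_norm.
  under eq_tlift => a b do [under eq_tlift => a0 b0 do rewrite -scalerA;
     rewrite tlift_scale (tlift_counitl hcuB); last by linearity].
  by rewrite (tlift_counitl hcuA) //; linearity.
apply: (tens_ext (f := fun X => tlift (fun a b => teps eA eB b *: a) (tdelta dA dB X))
     (g := fun X => X)); try by linearity.
move=> u v /=; rewrite (tdelta_pure _ _ hdA hdB); tens_norm.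
under eq_tlift => a b do [under eq_tlift => a0 b0 do rewrite -scalerA;
     rewrite tlift_scale (tlift_counitr hcuB); last by linearity].
by rewrite (tlift_counitr hcuA) //; linearity.
Qed.

Lemma tensor_coalgebra : is_coalgebra (tdelta dA dB) (teps eA eB).
Proof.
have [hdA [heA _]] := hA; have [hdB [heB _]] := hB.
split; first exact: tdelta_linear.
split; first exact: teps_linear.
by split; [exact: tensor_coassociative | exact: tensor_counital].
Qed.

End TensorCoalgebra.

Section TensorShelf.
Variables (K : fieldType) (C : lmodType K) (delta : C -> tens C C) (eps : C -> K)
  (T : tens (tens C C) C -> C).
Hypotheses (hd : linear_map delta) (he : linear_map (eps : C -> K^o))
  (hca : coassociative delta) (hcu : counital delta eps) (hcc : cocommutative delta)
  (hT : linear_map T)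
  (hTd : forall X, delta (T X) = tmap T T (tdelta (tdelta delta delta) delta X))
  (hTe : forall X, eps (T X) = teps (teps eps eps) eps X)
  (hTs : forall x y z u v : C,
    T (T (x \ot y \ot z) \ot u \ot v) =
    sw3 (fun u1 u2 u3 => sw3 (fun v1 v2 v3 =>
        T (T (x \ot u1 \ot v1) \ot T (y \ot u2 \ot v2) \ot T (z \ot u3 \ot v3)))
      (delta3 delta v)) (delta3 delta u)).

Let T_tlift (V W : lmodType K) (G : V -> W -> tens (tens C C) C) x :
  T (tlift G x) = tlift (fun a b => T (G a b)) x.
Proof. exact: tlift_morph. Qed.

Let delta_tlift (V W : lmodType K) (G : V -> W -> C) x :
  delta (tlift G x) = tlift (fun a b => delta (G a b)) x.
Proof. exact: tlift_morph. Qed.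

Ltac tens_normT :=
  tens_norm_with ltac:(first [setoid_rewrite T_tlift | setoid_rewrite delta_tlift]).

Lemma delta_T_pure x y z : delta (T (x \ot y \ot z)) =
  tlift (fun x1 x2 => tlift (fun y1 y2 => tlift (fun z1 z2 =>
     T (x1 \ot y1 \ot z1) \ot T (x2 \ot y2 \ot z2)) (delta z)) (delta y)) (delta x).
Proof.
have hD := tdelta_linear hd hd.
by rewrite hTd (tdelta_pure _ _ hD hd) (tdelta_pure _ _ hd hd); tens_normT.
Qed.

Lemma eps_T_pure x y z : eps (T (x \ot y \ot z)) = eps x * eps y * eps z.
Proof. by rewrite hTe (teps_pure _ _ (teps_linear he he) he) teps_pure. Qed.

Lemma lhdT_pure u v m n : lhdT delta T (u \ot v \ot (m \ot n)) =
  tlift (fun m1 m2 => tlift (fun n1 n2 =>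
     T (u \ot m1 \ot n1) \ot T (v \ot m2 \ot n2)) (delta n)) (delta m).
Proof. by rewrite /lhdT; tens_normT. Qed.

Lemma lhdT_linear : linear_map (lhdT delta T).
Proof. by apply: tlift_linear; linearity. Qed.

Lemma T_shelf_pure x y z u v : T (T (x \ot y \ot z) \ot u \ot v) =
  tlift (fun a c => tlift (fun u1 u2 => tlift (fun b d => tlift (fun v1 v2 =>
    T (T (x \ot u1 \ot v1) \ot T (y \ot u2 \ot v2) \ot T (z \ot c \ot d)))
  (delta b)) (delta v)) (delta a)) (delta u).
Proof. by rewrite hTs /sw3 /delta3; tens_normT. Qed.

Lemma R_lhdT_R_T (X : tens (tens C C) (tens C C)) : R_lhdT delta T X = R_T delta T X.
Proof.
have hD := tdelta_linear hd hd; have hL := lhdT_linear.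
move: X; apply: tens22_ext.
- by rewrite /R_lhdT; apply: tlift_linear; linearity.
- by rewrite /R_T /sw3 /delta3 /tmap; apply: tlift_linear; linearity.
move=> u v m n; rewrite /R_lhdT /R_T /sw3 /delta3 /tmap; tens_normT.
on_rhs coassoc.
on_rhs ltac:(under eq_tlift => a w do under eq_tlift => b0 b do coassoc).
by on_lhs ltac:(under eq_tlift => a b do pull_sum (delta b)).
Qed.

Let tdelta_tlift (V W : lmodType K) (G : V -> W -> tens C C) x :
  tdelta delta delta (tlift G x) = tlift (fun a b => tdelta delta delta (G a b)) x.
Proof. exact: (tlift_morph _ _ (tdelta_linear hd hd)). Qed.

Let lhdT_tlift (V W : lmodType K) (G : V -> W -> tens (tens C C) (tens C C)) x :
  lhdT delta T (tlift G x) = tlift (fun a b => lhdT delta T (G a b)) x.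
Proof. exact: (tlift_morph _ _ lhdT_linear). Qed.

Let tmap_lhdT_tlift (V W : lmodType K)
  (G : V -> W -> tens (tens (tens C C) (tens C C)) (tens (tens C C) (tens C C))) x :
  tmap (lhdT delta T) (lhdT delta T) (tlift G x) =
  tlift (fun a b => tmap (lhdT delta T) (lhdT delta T) (G a b)) x.
Proof. exact: (tlift_morph _ _ (tmap_linear lhdT_linear lhdT_linear)). Qed.

Let tmap_lhdT_pure X Y :
  tmap (lhdT delta T) (lhdT delta T) (X \ot Y) = lhdT delta T X \ot lhdT delta T Y.
Proof. exact: (tmap_pure _ _ lhdT_linear lhdT_linear). Qed.

Let tdelta_pureC u v : tdelta delta delta (u \ot v) =
  tlift (fun u1 u2 => tlift (fun v1 v2 => (u1 \ot v1) \ot (u2 \ot v2)) (delta v)) (delta u).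
Proof. exact: tdelta_pure. Qed.

Let tdelta_T2_pure x y z x' y' z' :
  tdelta delta delta (T (x \ot y \ot z) \ot T (x' \ot y' \ot z')) =
  tlift (fun x1 x2 => tlift (fun y1 y2 => tlift (fun z1 z2 =>
  tlift (fun x'1 x'2 => tlift (fun y'1 y'2 => tlift (fun z'1 z'2 =>
    (T (x1 \ot y1 \ot z1) \ot T (x'1 \ot y'1 \ot z'1)) \ot
    (T (x2 \ot y2 \ot z2) \ot T (x'2 \ot y'2 \ot z'2)))
  (delta z')) (delta y')) (delta x')) (delta z)) (delta y)) (delta x).
Proof. by rewrite tdelta_pureC; tens_normT; setoid_rewrite delta_T_pure; tens_normT. Qed.

Let tdelta2_pure u v m n :
  tdelta (tdelta delta delta) (tdelta delta delta) (u \ot v \ot (m \ot n)) =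
  tlift (fun u1 u2 => tlift (fun v1 v2 => tlift (fun m1 m2 => tlift (fun n1 n2 =>
    (u1 \ot v1 \ot (m1 \ot n1)) \ot (u2 \ot v2 \ot (m2 \ot n2)))
  (delta n)) (delta m)) (delta v)) (delta u).
Proof.
have hD := tdelta_linear hd hd.
by rewrite (tdelta_pure _ _ hD hD) !tdelta_pureC; tens_normT.
Qed.

(* Keeps [setoid_rewrite] and [rewrite_strat] from unfolding these operations,
   so that the rewrite rules stated about them keep matching. *)
Opaque lhdT tdelta tmap teps tlift tpure.

Lemma delta_lhdT X : tdelta delta delta (lhdT delta T X) =
  tmap (lhdT delta T) (lhdT delta T) (tdelta (tdelta delta delta) (tdelta delta delta) X).
Proof.
have hD := tdelta_linear hd hd; have hL := lhdT_linear.
have hDD := tdelta_linear hD hD; have hmL := tmap_linear hL hL.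
move: X; apply: tens22_ext; try by linearity.
move=> u v m n.
repeat (rewrite_strat (bottomup (choice tpure_tliftl (choice tpure_tliftr
  (choice T_tlift (choice delta_tlift (choice tdelta_tlift (choice lhdT_tlift
  (choice tmap_lhdT_tlift (choice tmap_lhdT_pure (choice tdelta_T2_pure
  (choice tdelta2_pure (choice lhdT_pure delta_T_pure))))))))))))).
pull_sum_lhs (delta u); apply: eq_tlift => u1 u2.
pull_sum_lhs (delta v); apply: eq_tlift => v1 v2.
on_lhs ltac:(under eq_tlift => a b do
  [pull_sum (delta a); under eq_tlift => ? ? do pull_sum (delta b)]).
on_rhs ltac:(under eq_tlift => a b do
  [pull_sum (delta a); under eq_tlift => ? ? do pull_sum (delta b)]).
on_lhs cocomm_mid.
by apply: eq_tlift => a b; apply: eq_tlift => a1 b1; apply: eq_tlift => a3 b3; cocomm_mid.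
Qed.

Let teps_tlift (V W : lmodType K) (G : V -> W -> tens C C) x :
  (teps eps eps (tlift G x) : K^o) = tlift (fun a b => (teps eps eps (G a b) : K^o)) x.
Proof. exact: (tlift_morph _ _ (teps_linear he he)). Qed.

Let teps_pureC u v : teps eps eps (u \ot v) = eps u * eps v.
Proof. exact: teps_pure. Qed.

Let tlift_counit_mull (G : C -> K^o) x : linear_map G ->
  tlift (fun a b => (eps a * G b : K^o)) (delta x) = G x.
Proof. exact: (tlift_counitl hcu). Qed.

Lemma eps_lhdT X :
  teps eps eps (lhdT delta T X) = teps (teps eps eps) (teps eps eps) X.
Proof.
have hE := teps_linear he he; have hL := lhdT_linear.
move: X; apply: (tens22_ext (U := K^o) (f := fun x => teps eps eps (lhdT delta T x))
  (g := teps (teps eps eps) (teps eps eps))).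
- exact: (linear_map_comp hE hL).
- exact: (teps_linear hE hE).
move=> u v m n; rewrite teps_pure ?teps_pureC // lhdT_pure.
rewrite_strat (bottomup (choice teps_tlift (choice teps_pureC eps_T_pure))).
have E a b a' b' : eps u * eps a * eps a' * (eps v * eps b * eps b') =
   eps a' * (eps b' * (eps a * (eps b * (eps u * eps v)))) by ring.
under eq_tlift => a b do [under eq_tlift => a' b' do rewrite E;
  rewrite tlift_counit_mull; last by linearity].
under eq_tlift => a b do rewrite mulrCA.
by rewrite tlift_counit_mull /=; [ring | linearity].
Qed.

Lemma lhdT_coalg_morphism :
  coalg_morphism (tdelta (tdelta delta delta) (tdelta delta delta))
    (teps (teps eps eps) (teps eps eps)) (tdelta delta delta) (teps eps eps) (lhdT delta T).
Proof. by split; [exact: lhdT_linear | split; [exact: delta_lhdT | exact: eps_lhdT]]. Qed.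

Let T_shelf_pure2 x y z u v x' y' z' u' v' :
  T (T (x \ot y \ot z) \ot u \ot v) \ot T (T (x' \ot y' \ot z') \ot u' \ot v') =
  tlift (fun a c => tlift (fun u1 u2 => tlift (fun b d => tlift (fun v1 v2 =>
    T (T (x \ot u1 \ot v1) \ot T (y \ot u2 \ot v2) \ot T (z \ot c \ot d)))
  (delta b)) (delta v)) (delta a)) (delta u) \ot
  tlift (fun a c => tlift (fun u1 u2 => tlift (fun b d => tlift (fun v1 v2 =>
    T (T (x' \ot u1 \ot v1) \ot T (y' \ot u2 \ot v2) \ot T (z' \ot c \ot d)))
  (delta b)) (delta v')) (delta a)) (delta u').
Proof. by rewrite !T_shelf_pure. Qed.

Let lhdT_pure_T2 u v x y z x' y' z' :
  lhdT delta T (u \ot v \ot (T (x \ot y \ot z) \ot T (x' \ot y' \ot z'))) =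
  tlift (fun x1 x2 => tlift (fun y1 y2 => tlift (fun z1 z2 =>
  tlift (fun x'1 x'2 => tlift (fun y'1 y'2 => tlift (fun z'1 z'2 =>
    T (u \ot T (x1 \ot y1 \ot z1) \ot T (x'1 \ot y'1 \ot z'1)) \ot
    T (v \ot T (x2 \ot y2 \ot z2) \ot T (x'2 \ot y'2 \ot z'2)))
  (delta z')) (delta y')) (delta x')) (delta z)) (delta y)) (delta x).
Proof. by rewrite lhdT_pure; tens_normT; setoid_rewrite delta_T_pure; tens_normT. Qed.

Let tlift_tdelta_pure (U : lmodType K) (F : tens C C -> tens C C -> U) m n :
  bilinear_map F ->
  tlift F (tdelta delta delta (m \ot n)) =
  tlift (fun m1 m2 => tlift (fun n1 n2 => F (m1 \ot n1) (m2 \ot n2)) (delta n)) (delta m).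
Proof. by move=> hF; rewrite tdelta_pureC; tens_norm. Qed.

Ltac shelf_norm := repeat (rewrite_strat (bottomup (choice tpure_tliftl
  (choice tpure_tliftr (choice T_tlift (choice delta_tlift (choice tdelta_tlift
  (choice lhdT_tlift (choice tdelta_pureC (choice lhdT_pure_T2
  (choice lhdT_pure delta_T_pure))))))))))).

Lemma lhdT_shelf_identity (U V W : tens C C) :
  lhdT delta T (lhdT delta T (U \ot V) \ot W) =
  tlift (fun w1 w2 => lhdT delta T (lhdT delta T (U \ot w1) \ot lhdT delta T (V \ot w2)))
    (tdelta delta delta W).
Proof.
have hD := tdelta_linear hd hd; have hL := lhdT_linear.
move: U; apply: tens_ext; try by linearity.
move=> a a'; move: V; apply: tens_ext; try by linearity.
move=> b b'; move: W; apply: tens_ext; try by linearity.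
move=> m n.
on_lhs ltac:(shelf_norm; setoid_rewrite T_shelf_pure2; shelf_norm).
rewrite tlift_tdelta_pure; last by linearity.
shelf_norm.
pull_sum_rhs (delta b); apply: eq_tlift => b1 b2.
pull_sum_rhs (delta b'); apply: eq_tlift => b1' b2'.
on_rhs ltac:(under eq_tlift => m1 m2 do [pull_sum (delta m1); under eq_tlift => x1 x2 do
  [pull_sum (delta m2); under eq_tlift => P Q do
  [pull_sum (delta P); under eq_tlift => ? ? do pull_sum (delta Q)]]]).
on_rhs ltac:(under eq_tlift => m1 m2 do under eq_tlift => x1 x2 do cocomm_mid).
on_rhs cocomm_mid.
on_rhs ltac:(under eq_tlift => m1 m2 do under eq_tlift => x1 P do pull_sum (delta P)).
on_lhs ltac:(under eq_tlift => m1 m2 do [pull_sum (delta m1);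
  under eq_tlift => c1 c3 do pull_sum (delta c1); coassoc]).
on_lhs ltac:(under eq_tlift => m1 m2 do under eq_tlift => x1 P do
  under eq_tlift => y1 y1' do [pull_sum (delta m2);
  under eq_tlift => e1 e3 do pull_sum (delta e1); coassoc]).
apply: eq_tlift => m1 m2; apply: eq_tlift => x1 P; apply: eq_tlift => y1 y1'.
apply: eq_tlift => x2 Q; apply: eq_tlift => y2 y2'.
on_rhs ltac:(under eq_tlift => n1 n2 do under eq_tlift => w1 w2 do cocomm_mid).
on_rhs cocomm_mid.
on_rhs ltac:(under eq_tlift => n1 n2 do under eq_tlift => w1 R do pull_sum (delta R)).
on_lhs ltac:(under eq_tlift => n1 n2 do [pull_sum (delta n1);
  under eq_tlift => c1 c3 do pull_sum (delta c1); coassoc]).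
by on_lhs ltac:(under eq_tlift => n1 n2 do under eq_tlift => w1 R do
  under eq_tlift => z1 z1' do [pull_sum (delta n2);
  under eq_tlift => e1 e3 do pull_sum (delta e1); coassoc]).
Qed.

End TensorShelf.

Section RackInverse.
Variables (K : fieldType) (C : lmodType K) (delta : C -> tens C C) (eps : C -> K)
  (T T' Tsw : tens (tens C C) C -> C).
Hypotheses (hd : linear_map delta) (he : linear_map (eps : C -> K^o))
  (hca : coassociative delta) (hcu : counital delta eps) (hcc : cocommutative delta)
  (hT : linear_map T) (hT' : linear_map T') (hTsw : linear_map Tsw)
  (TswE : forall x y z, Tsw (x \ot y \ot z) = T' (x \ot z \ot y))
  (hT'T : forall x y z, tlift (fun y1 y2 => tlift (fun z1 z2 =>
     T' (T (x \ot y2 \ot z2) \ot z1 \ot y1)) (delta z)) (delta y) = (eps y * eps z) *: x).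

Lemma tlift_counit_tpure (a b m n : C) :
  tlift (fun m1 m2 => tlift (fun n1 n2 =>
    ((eps m1 * eps n1) *: a) \ot ((eps m2 * eps n2) *: b)) (delta n)) (delta m) =
  (eps m * eps n) *: (a \ot b).
Proof.
have E m1 m2 n1 n2 : ((eps m1 * eps n1) *: a) \ot ((eps m2 * eps n2) *: b) =
    eps m1 *: (eps m2 *: (eps n1 *: (eps n2 *: (a \ot b)))).
  by rewrite tpureZl tpureZr !scalerA mulrACA !mulrA.
under eq_tlift => m1 m2 do under eq_tlift => n1 n2 do rewrite E.
under eq_tlift => m1 m2 do
  [rewrite tlift_scale tlift_scale (tlift_counitl hcu); last by linearity].
rewrite (tlift_counitl hcu (G := fun m2 => eps m2 *: (eps n *: (a \ot b)))); last by linearity.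
by rewrite scalerA.
Qed.

Opaque lhdT tdelta tmap teps tlift tpure.

Lemma lhdT_rack_inverse (u v : tens C C) :
  tlift (fun v1 v2 => lhdT delta Tsw (lhdT delta T (u \ot v2) \ot v1))
    (tdelta delta delta v) = teps eps eps v *: u.
Proof.
have hD := tdelta_linear hd hd; have hE := teps_linear he he.
have hL := lhdT_linear hd hT; have hL' := lhdT_linear hd hTsw.
have lhdT_tlift (V W : lmodType K) (G : V -> W -> tens (tens C C) (tens C C)) x :
    lhdT delta Tsw (tlift G x) = tlift (fun a b => lhdT delta Tsw (G a b)) x.
  exact: tlift_morph.
move: u; apply: (tens_ext (f := fun u => tlift (fun v1 v2 =>
  lhdT delta Tsw (lhdT delta T (u \ot v2) \ot v1)) (tdelta delta delta v))
  (g := fun u => teps eps eps v *: u)); try by linearity.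
move=> a b; move: v; apply: (tens_ext (f := fun v => tlift (fun v1 v2 =>
  lhdT delta Tsw (lhdT delta T (a \ot b \ot v2) \ot v1)) (tdelta delta delta v))
  (g := fun v => teps eps eps v *: (a \ot b))); try by linearity.
move=> m n; rewrite (tdelta_pure _ _ hd hd); tens_norm.
rewrite teps_pure // -tlift_counit_tpure.
on_rhs ltac:(under eq_tlift => m1 m2 do under eq_tlift => n1 n2 do
  rewrite -[(eps m1 * eps n1) *: a]hT'T -[(eps m2 * eps n2) *: b]hT'T).
have lhdT_pureT := lhdT_pure hd hT; have lhdT_pureTsw := lhdT_pure hd hTsw.
repeat (rewrite_strat (bottomup (choice lhdT_pureT (choice lhdT_pureTsw
  (choice TswE (choice lhdT_tlift (choice tpure_tliftl tpure_tliftr))))))).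
on_lhs ltac:(under eq_tlift => m1 m2 do
  [pull_sum (delta m1); under eq_tlift => ? ? do pull_sum (delta m2)]).
on_rhs ltac:(under eq_tlift => m1 m2 do
  [pull_sum (delta m1); under eq_tlift => ? ? do pull_sum (delta m2)]).
on_lhs cocomm_mid.
apply: eq_tlift => m1 m2; apply: eq_tlift => x1 y1; apply: eq_tlift => x2 y2.
on_lhs ltac:(under eq_tlift => n1 n2 do
  [pull_sum (delta n1); under eq_tlift => ? ? do pull_sum (delta n2)]).
on_rhs ltac:(under eq_tlift => n1 n2 do
  [pull_sum (delta n1); under eq_tlift => ? ? do pull_sum (delta n2)]).
by on_lhs cocomm_mid.
Qed.

End RackInverse.

(* The rack axiom applies the inverse T' to the Sweedler factors of z before
   those of y, so the inverse of [lhdT delta T] is [lhdT delta (Tswap T')]. *)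
Definition Tswap (K : fieldType) (C : lmodType K) (T : tens (tens C C) C -> C) :
  tens (tens C C) C -> C :=
  tlift (fun p z => tlift (fun x y => T (x \ot z \ot y)) p).

Section Tswap.
Variables (K : fieldType) (C : lmodType K) (delta : C -> tens C C) (eps : C -> K)
  (T : tens (tens C C) C -> C).
Hypotheses (hd : linear_map delta) (he : linear_map (eps : C -> K^o))
  (hca : coassociative delta) (hcc : cocommutative delta) (hT : linear_map T).

Lemma Tswap_linear : linear_map (Tswap T).
Proof. by apply: tlift_linear; linearity. Qed.

Lemma Tswap_pure x y z : Tswap T (x \ot y \ot z) = T (x \ot z \ot y).
Proof. by rewrite /Tswap !tlift_pure //; linearity. Qed.

Lemma delta_Tswap :
  (forall X, delta (T X) = tmap T T (tdelta (tdelta delta delta) delta X)) ->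
  forall X, delta (Tswap T X) = tmap (Tswap T) (Tswap T) (tdelta (tdelta delta delta) delta X).
Proof.
move=> hTd; have hS := Tswap_linear.
have hD3 := tdelta_linear (tdelta_linear hd hd) hd.
have hm := tmap_linear hS hS.
apply: tens3_ext; try by linearity.
move=> x y z; rewrite Tswap_pure (delta_T_pure hd hT hTd).
rewrite (tdelta_pure _ _ (tdelta_linear hd hd) hd) (tdelta_pure _ _ hd hd); tens_norm.
rewrite /tmap; tens_norm; rewrite /Tswap; tens_norm.
by apply: eq_tlift => x1 x2; rewrite tlift_exchange.
Qed.

Lemma eps_Tswap :
  (forall X, eps (T X) = teps (teps eps eps) eps X) ->
  forall X, eps (Tswap T X) = teps (teps eps eps) eps X.
Proof.
move=> hTe; have hE := teps_linear he he; have hE3 := teps_linear hE he.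
apply: (tens3_ext (U := K^o) (f := fun X => eps (Tswap T X))).
- exact: (linear_map_comp he Tswap_linear).
- exact: hE3.
move=> x y z; rewrite Tswap_pure (eps_T_pure he hTe) !teps_pure //=; ring.
Qed.

Lemma Tswap_shelf_identity :
  (forall x y z u v : C, T (T (x \ot y \ot z) \ot u \ot v) =
    sw3 (fun u1 u2 u3 => sw3 (fun v1 v2 v3 =>
      T (T (x \ot u1 \ot v1) \ot T (y \ot u2 \ot v2) \ot T (z \ot u3 \ot v3)))
    (delta3 delta v)) (delta3 delta u)) ->
  forall x y z u v : C, Tswap T (Tswap T (x \ot y \ot z) \ot u \ot v) =
    sw3 (fun u1 u2 u3 => sw3 (fun v1 v2 v3 =>
      Tswap T (Tswap T (x \ot u1 \ot v1) \ot Tswap T (y \ot u2 \ot v2)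
        \ot Tswap T (z \ot u3 \ot v3)))
    (delta3 delta v)) (delta3 delta u).
Proof.
move=> hTs x y z u v; have hS := Tswap_linear.
rewrite !Tswap_pure (T_shelf_pure hT hTs) /sw3 /delta3 /tmap; tens_norm.
rewrite /Tswap; tens_norm.
pull_sum_lhs (delta u).
on_lhs ltac:(under eq_tlift => b d do pull_sum (delta b)).
on_lhs ltac:(rewrite tlift_cocommutative23; [| by linearity ..]).
apply: eq_tlift => b d; apply: eq_tlift => v1 v2.
by rewrite tlift_cocommutative23; [| by linearity ..].
Qed.

Lemma trilinear_shelf_Tswap :
  trilinear_shelf delta eps T -> trilinear_shelf delta eps (Tswap T).
Proof.
move=> [hC [[_ [hTd hTe]] hTs]]; split=> //; split; last exact: Tswap_shelf_identity.
by split; [exact: Tswap_linear | split; [exact: delta_Tswap | exact: eps_Tswap]].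
Qed.

End Tswap.

Lemma linear_shelf_lhdT (K : fieldType) (C : lmodType K)
  (delta : C -> tens C C) (eps : C -> K) (T : tens (tens C C) C -> C) :
  cocommutative delta -> trilinear_shelf delta eps T ->
  linear_shelf (tdelta delta delta) (teps eps eps) (lhdT delta T).
Proof.
move=> hcc [hC [[hT [hTd hTe]] hTs]]; have [hd [he [hca hcu]]] := hC.
split; first exact: tensor_coalgebra.
split; first exact: lhdT_coalg_morphism.
exact: lhdT_shelf_identity.
Qed.

Theorem theorem3p13 (K : fieldType) (C : lmodType K)
  (delta : C -> tens C C) (eps : C -> K) (T : tens (tens C C) C -> C) :
  is_coalgebra delta eps ->
  cocommutative delta ->
  trilinear_shelf delta eps T ->
  linear_shelf (tdelta delta delta) (teps eps eps) (lhdT delta T) /\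
  (trilinear_rack delta eps T ->
     linear_rack (tdelta delta delta) (teps eps eps) (lhdT delta T) /\
     (forall X : tens (tens C C) (tens C C), R_lhdT delta T X = R_T delta T X)).
Proof.
move=> [hd [he [hca hcu]]] hcc hTsh.
have [_ [[hT _] _]] := hTsh.
split; first exact: linear_shelf_lhdT.
move=> [_ [T' [hT'sh hT'T]]]; have [_ [[hT' _] _]] := hT'sh.
split; last exact: R_lhdT_R_T.
split; first exact: linear_shelf_lhdT.
have hS' := Tswap_linear hT'; have hS := Tswap_linear hT.
exists (lhdT delta (Tswap T')); split.
  exact/linear_shelf_lhdT/trilinear_shelf_Tswap.
move=> u v; split.
  apply: (lhdT_rack_inverse hd he hca hcu hcc hT hT' hS') => x y z.
    by rewrite Tswap_pure.
  exact: (hT'T x y z).1.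
apply: (lhdT_rack_inverse hd he hca hcu hcc hS' hS hT) => x y z.
  by rewrite Tswap_pure.
under eq_tlift => y1 y2 do under eq_tlift => z1 z2 do rewrite !Tswap_pure //.
by rewrite tlift_exchange (hT'T x z y).2 mulrC.
Qed.
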